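(* For every block $i\in\{1,\dots,N\}$, the function $\hat u_i^*(\epsilon)=\sum_{\gamma_G,\gamma_H\in\{H_1,\dots,H_K\}}u_i^*(\langle\epsilon,\gamma_G,\gamma_H\rangle)$ is non-increasing in the battery energy state $\epsilon$.
   Context: Finite-horizon MDP with $N$ blocks of length $\tau>0$. Parameters: $B_m>0$, positive integers $M,K$; channel levels $0<H_1<\dots<H_K$; $R,W,\sigma^2,g_0,\theta,d_G,d_H>0$; $p_G^{\max},p_H^{\max}>0$; weights $w_G,w_D>0$; $E_{H}$ a random variable with density $f_{E_H}$ on $[0,E_m]$. A state is $s=\langle\epsilon,\gamma_G,\gamma_H\rangle$ with $\epsilon\in\{(2m-1)B_m/(2M): m=1,\dots,M\}$ and $\gamma_G,\gamma_H\in\{H_1,\dots,H_K\}$. Let $p^{inv}_j(s)=(2^{R/(W\tau)}-1)\sigma^2(g_0 d_j^{-\theta}\gamma_j)^{-1}$ for $j\in\{G,H\}$, $\kappa=\min\{p_G^{\max},w_D(w_G\tau)^{-1}\}$, and $c(s)=w_D$ if $p^{inv}_G(s)>\kappa$, $c(s)=w_G p^{inv}_G(s)\tau$ otherwise. The allowable actions are $\mathcal{A}_s=\{0\}$ if $p^{inv}_H(s)>\min\{\epsilon/\tau,p_H^{\max}\}$ and $\mathcal{A}_s=\{0,1\}$ otherwise; the cost is $c(s,\alpha)=(1-\alpha)c(s)$. Transitions: given $s$ and $\alpha$, the next channel states $\gamma_G',\gamma_H'$ are independent, each uniform on $\{H_1,\dots,H_K\}$, independent of the next energy state $\epsilon'=Q(\epsilon-\alpha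 p^{inv}_H(s)\tau+E_H)$, where $Q(\varepsilon)=\big(2\min\{\lfloor M\min\{\varepsilon,B_m\}/B_m\rfloor+1,M\}-1\big)B_m/(2M)$; denote the resulting transition probability $p(s'|s,\alpha)$. Optimal cost-to-go functions: $u_N^*(s)=\min_{\alpha\in\mathcal{A}_s}c(s,\alpha)$ and, for $i<N$, $u_i^*(s)=\min_{\alpha\in\mathcal{A}_s}\{c(s,\alpha)+\sum_{s'}p(s'|s,\alpha)u_{i+1}^*(s')\}$. *)

From HB Require Import structures.
From mathcomp Require Import all_boot all_order all_algebra.
From mathcomp Require Import all_classical all_reals all_analysis.
Set Implicit Arguments. Unset Strict Implicit. Unset Printing Implicit Defensive.
Import Order.TTheory GRing.Theory Num.Theory.
Local Open Scope ring_scope.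
Local Open Scope classical_set_scope.

(* Model data of the finite-horizon MDP.  Channel levels H_1 < ... < H_K are
   indexed by 'I_K (H k = H_{k+1}); energy levels
   (2m-1) B_m/(2M), m = 1..M, are indexed by j : 'I_M (m = j+1). *)
Record mdp (R : realType) (M K : nat) := Mdp {
  tau : R;  Bm : R;  Hl : 'I_K -> R;
  Rr : R;  W : R;  sigma2 : R;  g0 : R;  theta : R;  dG : R;  dH : R;
  pGmax : R;  pHmax : R;  wG : R;  wD : R;
  Em : R;  fEH : R -> R  (* density of E_H on [0, Em] *)
}.

Section Model.
Variables (R : realType) (M K : nat) (P : mdp R M K).

Definition eps (j : 'I_M) : R := (2 * j.+1 - 1)%N%:R * Bm P / (2 * M%:R).

Definition Q (e : R) : R :=
  let z : int := Num.min (Num.floor (M%:R * Num.min e (Bm P) / Bm P) + 1) (M%:Z) in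
  (2 * z - 1)%:~R * Bm P / (2 * M%:R).

Definition state := ('I_M * 'I_K * 'I_K)%type.
Definition st_eps (s : state) : R := eps s.1.1.
Definition st_gG (s : state) : R := Hl P s.1.2.
Definition st_gH (s : state) : R := Hl P s.2.

Definition pinv (d gamma : R) : R :=
  (2 `^ (Rr P / (W P * tau P)) - 1) * sigma2 P
    / (g0 P * d `^ (- theta P) * gamma).
Definition pinvG (s : state) : R := pinv (dG P) (st_gG s).
Definition pinvH (s : state) : R := pinv (dH P) (st_gH s).

Definition kappa : R := Num.min (pGmax P) (wD P / (wG P * tau P)).

Definition cst (s : state) : R :=
  if pinvG s > kappa then wD P else wG P * pinvG s * tau P.

Definition allow1 (s : state) : bool :=
  pinvH s <= Num.min (st_eps s / tau P) (pHmax P).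

Definition cost (s : state) (a : bool) : R := (1 - (a : nat)%:R) * cst s.

Definition suppE : set R := `[0, Em P].
Definition evQ (x e : R) : set R := suppE `&` [set t | Q (x + t) = e].
Definition prob_Q (x e : R) : R :=
  fine (\int[@lebesgue_measure R]_(t in evQ x e) (fEH P t)%:E)%E.

Definition ptrans (s : state) (a : bool) (s' : state) : R :=
  (1 / K%:R) * (1 / K%:R) *
  prob_Q (st_eps s - (a : nat)%:R * pinvH s * tau P) (st_eps s').

Definition qval (V : state -> R) (s : state) (a : bool) : R :=
  cost s a + \sum_(s' : state) ptrans s a s' * V s'.

Definition minA (F : bool -> R) (s : state) : R :=
  if allow1 s then Num.min (F false) (F true) else F false.

(* backward recursion: V k = u^*_{N-k} *)
Fixpoint Vk (k : nat) (s : state) : R :=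
  match k with
  | 0 => minA (cost s) s
  | k'.+1 => minA (qval (Vk k') s) s
  end.

Definition ustar (N i : nat) (s : state) : R := Vk (N - i) s.

Definition uhat (N i : nat) (j : 'I_M) : R :=
  \sum_(gG : 'I_K) \sum_(gH : 'I_K) ustar N i (j, gG, gH).

End Model.

From Pilot Require Import Defs.
From HB Require Import structures.
From mathcomp Require Import all_boot all_order all_algebra.
From mathcomp Require Import all_classical all_reals all_analysis.
From mathcomp Require Import zify ring.
From mathcomp Require Import measurable_realfun.
Import Order.TTheory GRing.Theory Num.Theory.
Local Open Scope ring_scope.
Local Open Scope classical_set_scope.

(* By backward induction, u_i^* is non-increasing in the energy index for
   every fixed pair of channel states.  The immediate cost does not depend on
   the energy, and more energy only enlarges the set of allowable actions.  The
   next energy state is Q(x + E_H) with x = eps - alpha p_H tau >= 0, and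
   {Q(x + E_H) >= eps_n} = {x + E_H >= n B_m / M}, so raising x raises every
   tail probability; summation by parts then shows that the expectation of a
   non-increasing function of the next energy level can only decrease. *)

Lemma summation_by_parts (R : comRingType) (G h : nat -> R) n :
  \sum_(j < n) (G j - G j.+1) * h j =
  G 0%N * h 0%N - G n * h n + \sum_(j < n) G j.+1 * (h j.+1 - h j).
Proof.
elim: n => [|n IHn]; first by rewrite !big_ord0; ring.
by rewrite !big_ord_recr /= IHn; ring.
Qed.

Lemma ler_sum_dominance (R : numDomainType) (G1 G2 h : nat -> R) n :
  G1 0%N = G2 0%N -> G1 n = G2 n -> (forall j, G1 j <= G2 j) ->
  (forall j, (j.+1 < n)%N -> h j.+1 <= h j) ->
  \sum_(j < n) (G2 j - G2 j.+1) * h j <= \sum_(j < n) (G1 j - G1 j.+1) * h j.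
Proof.
move=> G0 Gn le_G h_anti.
rewrite !summation_by_parts G0 Gn lerD2l; apply: ler_sum => j _.
have [lt_jn | ge_jn] := ltnP j.+1 n.
  by apply: ler_wnM2r; [rewrite subr_le0; apply: h_anti | apply: le_G].
have -> : j.+1 = n by apply/eqP; rewrite eqn_leq ltn_ord.
by rewrite Gn.
Qed.

Lemma sum_triple (V : nmodType) (I J L : finType) (F : I * J * L -> V) :
  \sum_(x : I * J * L) F x = \sum_(i : I) \sum_(j : J) \sum_(l : L) F (i, j, l).
Proof.
transitivity (\sum_(p : I * J) \sum_(l : L) F (p, l)).
  by rewrite pair_big; apply: (@eq_bigr _ _ _ (I * J * L)%type) => -[].
by rewrite [RHS]pair_big; apply: eq_bigr => -[].
Qed.

Lemma eqz_min_succ (k : int) (j m : nat) : (j < m)%N ->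
  (Num.min (k + 1) m%:Z == j.+1%:Z) = (j%:Z <= k) && ((j.+1 < m)%N ==> (k < j.+1%:Z)).
Proof.
move=> lt_jm; have [|] := leP (k + 1) m%:Z; case: ltnP => /= ? ?;
  by apply/idP/idP => [/eqP|/andP[]]; lia.
Qed.

Section EnergyMonotonicity.
Variables (R : realType) (M K : nat) (P : mdp R M K).
Hypotheses (M_gt0 : (0 < M)%N) (Bm_gt0 : 0 < Bm P).

Definition qcut (n : nat) : R := n%:R * Bm P / M%:R.
Definition qlevel (z : int) : R := (2 * z - 1)%:~R * Bm P / (2 * M%:R).

Lemma eps_qlevel (j : 'I_M) : eps P j = qlevel j.+1.
Proof. by rewrite /eps /qlevel -pmulrn; do 3 f_equal; lia. Qed.

Lemma Q_qlevel y :
  Q P y = qlevel (Num.min (Num.floor (M%:R * Num.min y (Bm P) / Bm P) + 1) M%:Z).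
Proof. by []. Qed.

Lemma ler_qlevel : {mono qlevel : z1 z2 / z1 <= z2}.
Proof.
move=> z1 z2; rewrite /qlevel ler_pM2r ?invr_gt0 ?mulr_gt0 ?ltr0n // ler_pM2r //.
by rewrite ler_int; lia.
Qed.

Lemma qlevel_inj : injective qlevel.
Proof. by move=> z1 z2 eq_q; apply/le_anti; rewrite -!ler_qlevel eq_q lexx. Qed.

Lemma ler_eps (j1 j2 : 'I_M) : (eps P j1 <= eps P j2) = (j1 <= j2)%N.
Proof. by rewrite !eps_qlevel ler_qlevel lez_nat. Qed.

Lemma eps_ge0 (j : 'I_M) : 0 <= eps P j.
Proof. by rewrite /eps !mulr_ge0 ?invr_ge0 ?mulr_ge0 ?ler0n ?ltW. Qed.

Lemma qcut_le_floor y n : (n <= M)%N ->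
  (n%:Z <= Num.floor (M%:R * Num.min y (Bm P) / Bm P)) = (qcut n <= y).
Proof.
move=> le_nM; have M_gt0R : 0 < M%:R :> R by rewrite ltr0n.
have qcut_le_Bm : qcut n <= Bm P.
  by rewrite /qcut ler_pdivrMr // mulrC ler_pM2l // ler_nat.
rewrite floor_ge_int -[_%:~R]/(n%:R) ler_pdivlMr // -ler_pdivrMl //.
by rewrite mulrC le_min qcut_le_Bm andbT.
Qed.

Lemma Q_eq_eps y (j : 'I_M) :
  (Q P y == eps P j) = (qcut j <= y) && ((j.+1 < M)%N ==> (y < qcut j.+1)).
Proof.
rewrite Q_qlevel eps_qlevel (inj_eq qlevel_inj) eqz_min_succ //.
rewrite qcut_le_floor ?(ltnW (ltn_ord j)) //.
by case: ltnP => //= lt_jM; rewrite ltNge qcut_le_floor // -ltNge.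
Qed.

Hypothesis fEH_meas : measurable_fun (suppE P) (fEH P).
Hypothesis fEH_ge0 : forall t, 0 <= fEH P t.
Hypothesis fEH_int1 :
  (\int[@lebesgue_measure R]_(t in suppE P) (fEH P t)%:E)%E = 1%E.

Definition mass (A : set R) : R :=
  fine (\int[@lebesgue_measure R]_(t in A) (fEH P t)%:E)%E.

Let measurable_suppE : measurable (suppE P). Proof. exact: measurable_itv. Qed.

Let fEH_measE : measurable_fun (suppE P) (EFin \o fEH P).
Proof. exact/measurable_EFinP. Qed.

Let fEH_ge0E (D : set R) t : D t -> (0 <= (fEH P t)%:E)%E.
Proof. by rewrite lee_fin fEH_ge0. Qed.

Lemma integral_fEH_fin_num A : measurable A -> A `<=` suppE P ->
  (\int[@lebesgue_measure R]_(t in A) (fEH P t)%:E)%E \is a fin_num.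
Proof.
move=> mA A_supp.
rewrite ge0_fin_numE; last by apply: integral_ge0 => t; exact: fEH_ge0E.
apply: (@le_lt_trans _ _ 1%E); last exact: ltry.
rewrite -fEH_int1; apply: ge0_subset_integral => //; exact: fEH_ge0E.
Qed.

Lemma le_mass A B : measurable A -> measurable B -> B `<=` A -> A `<=` suppE P ->
  mass B <= mass A.
Proof.
move=> mA mB BA A_supp; have B_supp := subset_trans BA A_supp.
rewrite fine_le ?integral_fEH_fin_num //.
apply: ge0_subset_integral => //; last exact: fEH_ge0E.
exact: measurable_funS fEH_measE.
Qed.

Lemma mass_setD A B : measurable A -> measurable B -> B `<=` A -> A `<=` suppE P ->
  mass (A `\` B) = mass A - mass B.
Proof.
move=> mA mB BA A_supp; have B_supp := subset_trans BA A_supp.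
have mAB : measurable (A `\` B) by exact: measurableD.
have AB_supp : A `\` B `<=` suppE P by move=> t [/A_supp].
rewrite /mass -{2}(setDUK BA) ge0_integral_setU //.
- by rewrite [in RHS]fineD ?integral_fEH_fin_num // addrC addKr.
- by rewrite setDUK //; exact: measurable_funS fEH_measE.
- exact: fEH_ge0E.
- by apply/disj_setPS => t [? []].
Qed.

(* The guard [n < M] empties the tail beyond the top level, where Q saturates. *)
Definition Qtail (x : R) (n : nat) : set R :=
  suppE P `&` [set t | (n < M)%N /\ qcut n <= x + t].

Lemma Qtail_supp x n : Qtail x n `<=` suppE P.
Proof. by move=> t []. Qed.

Lemma measurable_Qtail x n : measurable (Qtail x n).
Proof.
rewrite /Qtail; apply: measurableI => //; case: ltnP => _.
  rewrite (_ : [set t | _] = `[qcut n - x, +oo[%classic) //.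
  by apply/seteqP; split => t /=; rewrite in_itv /= andbT lerBlDl; [case | split].
by rewrite (_ : [set t | _] = set0) //; apply/seteqP; split => t // [].
Qed.

Lemma QtailS x n : Qtail x n.+1 `<=` Qtail x n.
Proof.
move=> t [supp_t [lt_nM le_qx]]; split => //; split; first exact: ltnW.
by apply: le_trans le_qx; rewrite /qcut ler_pM2r ?invr_gt0 ?ltr0n // ler_pM2r // ler_nat.
Qed.

Lemma le_Qtail x1 x2 n : x1 <= x2 -> Qtail x1 n `<=` Qtail x2 n.
Proof.
move=> le_x t [supp_t [lt_nM le_qx]]; split => //; split => //.
by rewrite (le_trans le_qx) ?lerD2r.
Qed.

Lemma Qtail0 x : 0 <= x -> Qtail x 0 = suppE P.
Proof.
move=> x_ge0; apply/seteqP; split => [t []//|t supp_t]; split => //; split => //.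
by rewrite /qcut !mul0r addr_ge0 //; move: supp_t; rewrite /suppE /= in_itv => /andP[].
Qed.

Lemma QtailM x : Qtail x M = set0.
Proof. by apply/seteqP; split => t // [_ []]; rewrite ltnn. Qed.

Lemma evQ_eps x (j : 'I_M) : evQ P x (eps P j) = Qtail x j `\` Qtail x j.+1.
Proof.
apply/seteqP; split => t /=.
  move=> [supp_t /eqP]; rewrite Q_eq_eps => /andP[le_qx /implyP lt_xq].
  split=> [|[_ [lt_jM]]]; first by split=> //; split.
  by rewrite leNgt lt_xq.
move=> [[supp_t [_ le_qx]] not_tail]; split => //; apply/eqP.
rewrite Q_eq_eps le_qx; apply/implyP => lt_jM.
by rewrite ltNge; apply/negP => le_qx1; apply: not_tail.
Qed.

Lemma prob_Q_eps x (j : 'I_M) :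
  prob_Q P x (eps P j) = mass (Qtail x j) - mass (Qtail x j.+1).
Proof.
rewrite -[LHS]/(mass (evQ P x (eps P j))) evQ_eps mass_setD //.
- exact: measurable_Qtail.
- exact: measurable_Qtail.
- exact: QtailS.
- exact: Qtail_supp.
Qed.

Lemma sum_prob_Q_antitone x1 x2 (h : 'I_M -> R) : 0 <= x1 -> x1 <= x2 ->
  {homo h : j1 j2 / (j1 <= j2)%N >-> j2 <= j1} ->
  \sum_(j < M) prob_Q P x2 (eps P j) * h j <= \sum_(j < M) prob_Q P x1 (eps P j) * h j.
Proof.
move=> x1_ge0 le_x h_anti; pose hn n := h (insubd (Ordinal M_gt0) n).
have hnE x : \sum_(j < M) prob_Q P x (eps P j) * h j =
    \sum_(j < M) (mass (Qtail x j) - mass (Qtail x j.+1)) * hn j.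
  by apply: eq_bigr => j _; rewrite prob_Q_eps /hn valKd.
rewrite [X in X <= _]hnE [X in _ <= X]hnE.
apply: (@ler_sum_dominance _ (fun n => mass (Qtail x1 n)) (fun n => mass (Qtail x2 n)))
  => [||n|n lt_nM].
- by rewrite !Qtail0 // (le_trans x1_ge0).
- by rewrite !QtailM.
- by apply: le_mass; [exact: measurable_Qtail.. | exact: le_Qtail | exact: Qtail_supp].
- by apply: h_anti; rewrite !val_insubd lt_nM (ltnW lt_nM).
Qed.

Hypothesis tau_gt0 : 0 < tau P.

Lemma allow1_le (j1 j2 : 'I_M) g h : (j1 <= j2)%N ->
  allow1 P (j1, g, h) -> allow1 P (j2, g, h).
Proof.
rewrite /allow1 /st_eps /= -ler_eps => le_eps /le_trans; apply.
by rewrite le_min !ge_min lexx orbT ler_pM2r ?invr_gt0 // le_eps.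
Qed.

Lemma allow1_next_ge0 s : allow1 P s -> 0 <= st_eps P s - pinvH P s * tau P.
Proof. by rewrite /allow1 le_min subr_ge0 => /andP[+ _]; rewrite ler_pdivlMr. Qed.

Lemma minA_le (F1 F2 : bool -> R) s1 s2 :
  (allow1 P s1 -> allow1 P s2) -> F2 false <= F1 false ->
  (allow1 P s1 -> F2 true <= F1 true) -> Defs.minA P F2 s2 <= Defs.minA P F1 s1.
Proof.
rewrite /Defs.minA => allow12 le_false le_true.
have [A1|_] := boolP (allow1 P s1).
  by rewrite allow12 // le_min !ge_min le_false le_true // orbT.
by case: (allow1 P s2); rewrite ?ge_min le_false.
Qed.

Lemma qval_sum (V : state M K -> R) s a :
  qval P V s a = cost P s a + 1 / K%:R * (1 / K%:R) * \sum_(j < M)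
    prob_Q P (st_eps P s - (a : nat)%:R * pinvH P s * tau P) (eps P j) *
    \sum_(g < K) \sum_(h < K) V (j, g, h).
Proof.
rewrite /qval sum_triple mulr_sumr; congr (_ + _); apply: eq_bigr => j _.
rewrite !mulr_sumr; apply: eq_bigr => g _; rewrite !mulr_sumr; apply: eq_bigr => h _.
by rewrite /ptrans !mulrA.
Qed.

(* Used by rewriting: leaving these conversions to unification makes it unfold [pinv]
   and diverge. *)
Lemma cost_energy_indep (j1 j2 : 'I_M) g h a : cost P (j1, g, h) a = cost P (j2, g, h) a.
Proof. by rewrite /cost /cst /pinvG /st_gG. Qed.

Lemma pinvH_energy_indep (j1 j2 : 'I_M) g h : pinvH P (j1, g, h) = pinvH P (j2, g, h).
Proof. by rewrite /pinvH /st_gH. Qed.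

Lemma qval_le (V : state M K -> R) (j1 j2 : 'I_M) g h (a : bool) :
  (forall g' h', {homo (fun j => V (j, g', h')) : j j' / (j <= j')%N >-> j' <= j}) ->
  (j1 <= j2)%N -> 0 <= st_eps P (j1, g, h) - (a : nat)%:R * pinvH P (j1, g, h) * tau P ->
  qval P V (j2, g, h) a <= qval P V (j1, g, h) a.
Proof.
move=> V_anti le_j next_ge0.
rewrite !qval_sum (cost_energy_indep j2 j1) lerD2l; apply: ler_wpM2l.
  by rewrite mulr_ge0 ?divr_ge0.
apply: sum_prob_Q_antitone => //.
- by rewrite (pinvH_energy_indep j2 j1) lerD2r /st_eps /= ler_eps.
- by move=> j j' le_jj'; apply: ler_sum => g' _; apply: ler_sum => h' _; apply: V_anti.
Qed.

Lemma Vk_antitone k g h :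
  {homo (fun j => Vk P k (j, g, h)) : j1 j2 / (j1 <= j2)%N >-> j2 <= j1}.
Proof.
elim: k g h => [|k IHk] g h j1 j2 le_j /=; apply: minA_le; try exact: allow1_le le_j.
- by rewrite (cost_energy_indep j2 j1) lexx.
- by rewrite (cost_energy_indep j2 j1) lexx.
- by apply: qval_le => //; rewrite mulr0n !mul0r subr0 eps_ge0.
- by move=> /allow1_next_ge0 ?; apply: qval_le => //; rewrite mulr1n mul1r.
Qed.

End EnergyMonotonicity.

Theorem lemma3 (R : realType) (M K N : nat) (P : mdp R M K) :
  (0 < M)%N -> (0 < K)%N -> (0 < N)%N ->
  0 < tau P -> 0 < Bm P ->
  (forall k : 'I_K, 0 < Hl P k) ->
  (forall k l : 'I_K, (k < l)%N -> Hl P k < Hl P l) ->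
  0 < Rr P -> 0 < W P -> 0 < sigma2 P -> 0 < g0 P -> 0 < theta P ->
  0 < dG P -> 0 < dH P -> 0 < pGmax P -> 0 < pHmax P ->
  0 < wG P -> 0 < wD P ->
  0 < Em P ->
  measurable_fun (suppE P) (fEH P) ->
  (forall t, 0 <= fEH P t) ->
  (\int[@lebesgue_measure R]_(t in suppE P) (fEH P t)%:E)%E = 1%E ->
  forall i : nat, (1 <= i <= N)%N ->
  forall j1 j2 : 'I_M, eps P j1 <= eps P j2 ->
    uhat P N i j2 <= uhat P N i j1.
Proof.
move=> M_gt0 _ _ tau_gt0 Bm_gt0 _ _ _ _ _ _ _ _ _ _ _ _ _ _ fEH_meas fEH_ge0 fEH_int1
  i _ j1 j2.
rewrite ler_eps // => le_j.
apply: ler_sum => g _; apply: ler_sum => h _.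
by apply: Vk_antitone.
Qed.
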